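(* In the worst case, no algorithm that uses only one disk, accessed by sequential passes, can compute the Burrows–Wheeler transform of a text of length $n$ when the product of the size of its internal memory in bits and its number of passes is $o(n)$; likewise, no such algorithm can invert the Burrows–Wheeler transform (recover $T$ from $\mathrm{bwt}(T)$) when this product is $o(n)$.
   Context: Model: a machine with an internal memory of a given number of bits and a single disk; the input initially resides on the disk, the output must eventually reside on the disk, and the disk is accessed only by sequential passes (scans). For a text $T[1,n]$ over a finite ordered alphabet with a unique smallest terminating character $T[n]$, the suffix array $\mathrm{sa}[1,n]$ lists starting positions of the suffixes of $T$ in lexicographic order, and $\mathrm{bwt}(T)[i] = T[\mathrm{sa}[i]-1]$ if $\mathrm{sa}[i]>1$, $\mathrm{bwt}(T)[i]=T[n]$ if $\mathrm{sa}[i]=1$. ''In the worst case'' means: for any such algorithm whose (memory size in bits) $\times$ (number of passes) is $o(n)$, there are inputs of length $n$ (for infinitely many $n$) on which it does not produce the correct output. *)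

From mathcomp Require Import all_boot all_order.
Set Implicit Arguments. Unset Strict Implicit. Unset Printing Implicit Defensive.
Import Order.TTheory.

(* Positions are 1-based as in the paper: T[i] = nth _ T (i-1).          *)
Section Text.
Variables (disp : Order.disp_t) (Sig : finOrderType disp).

Fixpoint lexlt (s t : seq Sig) : bool :=
  match s, t with
  | [::], [::] => false
  | [::], _ :: _ => true
  | _ :: _, [::] => false
  | x :: s', y :: t' => (x < y)%O || ((x == y) && lexlt s' t')
  end.

Definition lexle (s t : seq Sig) : bool := (s == t) || lexlt s t.

Definition valid_text (T : seq Sig) : Prop :=
  0 < size T /\
  forall x0 : Sig, forall i, i < (size T).-1 -> (last x0 T < nth x0 T i)%O.

Definition suffix (T : seq Sig) (i : nat) : seq Sig := drop i.-1 T.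

Definition suffix_array (T : seq Sig) : seq nat :=
  sort (fun i j => lexle (suffix T i) (suffix T j)) (iota 1 (size T)).

Definition bwt (T : seq Sig) : seq Sig :=
  match T with
  | [::] => [::]
  | x0 :: _ =>
      [seq (if 1 < i then nth x0 T (i.-1).-1 else last x0 T) | i <- suffix_array T]
  end.

End Text.

(* Machine model: internal memory of m bits (state = m.-tuple bool),    *)
(* one disk (a sequence over a finite disk alphabet) accessed only by    *)
(* sequential left-to-right passes.  During a pass the machine reads the *)
(* cells one after another; on reading a cell it updates its memory and  *)
(* replaces the cell by an arbitrary (possibly empty) word, and at the   *)
(* end of the pass it may update its memory and append a word.  Memory   *)
(* persists between passes.  Input and output are encoded cell-wise on   *)
(* the disk through an injective encoding of the text alphabet.         *)
Record machine (Sig : finType) (m : nat) := Machine {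
  disk_alph : finType;
  enc : Sig -> disk_alph;
  enc_inj : injective enc;
  init : m.-tuple bool;
  step : m.-tuple bool -> disk_alph -> m.-tuple bool * seq disk_alph;
  finish : m.-tuple bool -> m.-tuple bool * seq disk_alph
}.

Section Run.
Variables (Sig : finType) (m : nat) (M : machine Sig m).

Fixpoint scan (q : m.-tuple bool) (d : seq (disk_alph M))
  : m.-tuple bool * seq (disk_alph M) :=
  match d with
  | [::] => (q, [::])
  | x :: d' =>
      let (q1, w) := @step _ _ M q x in
      let (q2, w') := scan q1 d' in (q2, w ++ w')
  end.

Definition pass (c : m.-tuple bool * seq (disk_alph M))
  : m.-tuple bool * seq (disk_alph M) :=
  let (q1, d1) := scan c.1 c.2 in
  let (q2, w) := @finish _ _ M q1 in (q2, d1 ++ w).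

Definition disk_after (p : nat) (x : seq Sig) : seq (disk_alph M) :=
  (iter p pass (@init _ _ M, map (@enc _ _ M) x)).2.

Definition outputs (p : nat) (x y : seq Sig) : Prop :=
  disk_after p x = map (@enc _ _ M) y.

End Run.

Definition little_o_n (f : nat -> nat) : Prop :=
  forall c, 0 < c -> exists N, forall n, N <= n -> c * f n <= n.

From Pilot Require Import Defs.
From mathcomp Require Import all_boot all_order zify.
Set Implicit Arguments. Unset Strict Implicit. Unset Printing Implicit Defensive.
Import Order.TTheory.

(* The BWT is injective on texts ending with a unique smallest character: the
   LF-mapping recovers the ranks of the suffixes from right to left.
   For bit vectors [be], [ga] of length [k] consider the text
   x(be) w(ga), where x(be) = b followed by a block [babb] or [abbb] per bit,
   and w(ga) = a block [ab] or [aa] per bit followed by [d], with d < a < b.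
   Its [3k+2] smallest suffixes are those starting at the last [b] of x(be),
   in w(ga), or at an [a] of x(be): their preceding characters are [b] or read
   off [bb] w(ga), and their ranks do not depend on [be].  The other suffixes
   start at a [b] of x(be), are larger than everything starting in w(ga), and
   compare independently of w(ga).  Hence bwt(x(be) w(ga)) = P(ga) Q(be)
   with P and Q injective.
   A machine with [m] bits of memory making [p] passes on an input cut in two
   halves is summarized at the cut by its crossing sequence of [2p] states.
   When [2mp < k], two different vectors share it, and cutting and pasting the
   two runs forces a wrong output on a mixed input, both for x(be) w(ga) and
   for P(ga) Q(be). *)

Lemma sub_in_count (T : eqType) (a1 a2 : pred T) s :
  {in s, forall x, a1 x -> a2 x} -> count a1 s <= count a2 s.
Proof.
elim: s => //= x s IH H.
rewrite leq_add ?IH //; last by move=> y ys; apply: H; rewrite inE ys orbT.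
case: (a1 x) (H x (mem_head _ _)) => //=; by move=> ->.
Qed.

Lemma sub_in_count_lt (T : eqType) (a1 a2 : pred T) s x :
  {in s, forall y, a1 y -> a2 y} -> x \in s -> a2 x -> ~~ a1 x -> count a1 s < count a2 s.
Proof.
elim: s => //= y s IH sub; rewrite inE => /predU1P[->|xs] a2x na1x.
  rewrite (negbTE na1x) a2x add0n add1n ltnS sub_in_count //.
  by move=> z zs; apply: sub; rewrite inE zs orbT.
rewrite -addnS leq_add ?IH //; last by move=> z zs; apply: sub; rewrite inE zs orbT.
by case: (a1 y) (sub y (mem_head _ _)) => // ->.
Qed.

Lemma flatten_map_inj (T A : Type) (f : T -> seq A) k :
  (forall c, size (f c) = k) -> injective f ->
  forall s s', size s = size s' -> flatten (map f s) = flatten (map f s') -> s = s'.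
Proof.
move=> sf f_inj; elim=> [|c s IH] [|c' s'] //= [sz] e.
have e1 : f c = f c' by have := congr1 (take k) e; rewrite !take_size_cat.
have e2 : flatten (map f s) = flatten (map f s').
  by have := congr1 (drop k) e; rewrite !drop_size_cat.
by rewrite (f_inj _ _ e1) (IH _ sz e2).
Qed.

Lemma cat_cut_paste (A : Type) (L1 R1 L2 R2 U1 V1 U2 V2 : seq A) :
  size U1 = size U2 -> size V1 = size V2 ->
  L1 ++ R1 = U1 ++ V1 -> L2 ++ R2 = U2 ++ V2 -> L1 ++ R2 = U2 ++ V1 ->
  U1 = U2 \/ V1 = V2.
Proof.
move=> sU sV e1 e2 e12.
have sL : size L1 = size L2.
  by move: (congr1 size e1) (congr1 size e2) (congr1 size e12); rewrite !size_cat; lia.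
case: (leqP (size L1) (size U2)) => [le_L1|lt_L1].
  right; move: (congr1 (drop (size U2)) e12) (congr1 (drop (size U2)) e2).
  rewrite !(drop_cat (size U2) L1) !(drop_cat (size U2) L2) -sL ltnNge le_L1 /=.
  by rewrite !drop_size_cat // => ->.
left; move: (congr1 (take (size U2)) e1) (congr1 (take (size U2)) e12).
by rewrite !(take_cat (size U2) L1) lt_L1 !take_size_cat // => ->.
Qed.

Section Lex.
Variables (disp : Order.disp_t) (Sig : finOrderType disp).
Implicit Types s t u : seq Sig.

Lemma lexlt_irr s : lexlt s s = false.
Proof. by elim: s => //= x s ->; rewrite ltxx eqxx. Qed.

Lemma lexlt_trans s t u : lexlt s t -> lexlt t u -> lexlt s u.
Proof.
elim: s t u => [|x s IH] [|y t] [|z u] //=.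
case/orP=> [lxy|/andP[/eqP <- st]]; case/orP=> [lyz|/andP[/eqP <- tu]].
- by rewrite (lt_trans lxy lyz).
- by rewrite lxy.
- by rewrite lyz.
- by rewrite eqxx (IH _ _ st tu) orbT.
Qed.

Lemma lexlt_asym s t : lexlt s t -> lexlt t s = false.
Proof.
by move=> st; apply/negP => /(lexlt_trans st); rewrite lexlt_irr.
Qed.

Lemma lexlt_total s t : s != t -> lexlt s t || lexlt t s.
Proof.
elim: s t => [|x s IH] [|y t] //=; rewrite eqseq_cons negb_and.
move=> ne; case: (ltgtP x y) => //= exy; subst y.
by rewrite eqxx /= in ne; apply: IH.
Qed.

Lemma lexle_total : total (@lexle _ Sig).
Proof.
move=> s t; rewrite /lexle eq_sym.
by case: (eqVneq s t) => //= /lexlt_total.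
Qed.

Lemma lexle_trans : transitive (@lexle _ Sig).
Proof.
move=> t s u /orP[/eqP->|st] // /orP[/eqP<-|tu]; first by rewrite /lexle st orbT.
by rewrite /lexle (lexlt_trans st tu) orbT.
Qed.

Lemma lexle_ltVeq s t : lexle s t -> s != t -> lexlt s t.
Proof. by case/orP=> [/eqP->|//]; rewrite eqxx. Qed.

Lemma lexle_ltF s t : lexle s t -> lexlt t s = false.
Proof. by case/orP=> [/eqP->|/lexlt_asym//]; rewrite lexlt_irr. Qed.

Lemma lexlt_drop_cat_indep (x w w' : seq Sig) :
  (forall i, i < size x -> lexlt w (drop i x ++ w)) ->
  (forall i, i < size x -> lexlt w' (drop i x ++ w')) ->
  forall i j,
    lexlt (drop i x ++ w) (drop j x ++ w) = lexlt (drop i x ++ w') (drop j x ++ w').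
Proof.
move=> w_min w'_min i j.
suff drop_indep u1 u2 : (exists i, u1 = drop i x) -> (exists j, u2 = drop j x) ->
    lexlt (u1 ++ w) (u2 ++ w) = lexlt (u1 ++ w') (u2 ++ w').
  by apply: drop_indep; [exists i|exists j].
have drop_lt i1 c u : c :: u = drop i1 x -> i1 < size x.
  by rewrite ltnNge => e; apply/negP => /drop_oversize; rewrite -e.
have drop_tail i1 c u : c :: u = drop i1 x -> exists i, u = drop i x.
  by move=> e; exists i1.+1; rewrite -add1n -drop_drop -e /= drop0.
elim: u1 u2 => [|c u1 IH] [|c2 u2] [i1 e1] [j1 e2].
- by rewrite !lexlt_irr.
- by rewrite cat0s e2 w_min ?w'_min //; apply: drop_lt e2.
- have lt_i1 := drop_lt _ _ _ e1.
  have := w_min i1 lt_i1; have := w'_min i1 lt_i1; rewrite -e1.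
  by move=> /lexlt_asym -> /lexlt_asym ->.
- by rewrite /= (IH _ (drop_tail _ _ _ e1) (drop_tail _ _ _ e2)).
Qed.

End Lex.

Section SortedRank.
Variables (disp : Order.disp_t) (Sig : finOrderType disp) (A : eqType).
Variable key : A -> seq Sig.

Let kle := fun i j => lexle (key i) (key j).

Lemma filter_key_lt_sorted (s : seq A) q :
  sorted kle s -> {in s &, injective key} -> q \in s ->
  filter (fun j => lexlt (key j) (key q)) s = take (index q s) s.
Proof.
elim: s => [|h s IH] //= srt inj qin.
have kle_trans : transitive kle by move=> ???; apply: lexle_trans.
have /allP h_min := order_path_min kle_trans srt.
case: (eqVneq h q) => [<-|nhq].
  rewrite lexlt_irr /=; apply/eqP; rewrite -(negbK (_ == _)) -has_filter.
  by apply/hasPn => j /h_min /lexle_ltF ->.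
rewrite inE eq_sym (negbTE nhq) /= in qin.
rewrite IH ?(path_sorted srt) //; last first.
  by move=> i j si sj; apply: inj; rewrite inE ?si ?sj orbT.
rewrite lexle_ltVeq ?[lexle _ _]h_min //; apply: contra_neq nhq => /inj -> //.
- by rewrite inE eqxx.
- by rewrite inE qin orbT.
Qed.

End SortedRank.

Section SuffixRank.
Variables (disp : Order.disp_t) (Sig : finOrderType disp) (T : seq Sig).
Local Notation n := (size T).
Local Notation sa := (suffix_array T).
Local Arguments suffix_array /.

Definition suffix_rank q :=
  count (fun j => lexlt (Defs.suffix T j) (Defs.suffix T q)) (iota 1 n).

Definition bwt_char (z : Sig) i := if 1 < i then nth z T i.-2 else last z T.

Lemma suffix_inj : {in iota 1 n &, injective (Defs.suffix T)}.
Proof.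
move=> i j; rewrite !mem_iota => /andP[i1 i2] /andP[j1 j2] /(congr1 size).
rewrite /Defs.suffix !size_drop; lia.
Qed.

Lemma perm_suffix_array : perm_eq sa (iota 1 n).
Proof. by rewrite perm_sort. Qed.

Lemma mem_suffix_array q : (q \in sa) = (q \in iota 1 n).
Proof. by rewrite mem_sort. Qed.

Lemma size_suffix_array : size sa = n.
Proof. by rewrite size_sort size_iota. Qed.

Lemma uniq_suffix_array : uniq sa.
Proof. by rewrite sort_uniq iota_uniq. Qed.

Lemma filter_suffix_array q : q \in iota 1 n ->
  filter (fun j => lexlt (Defs.suffix T j) (Defs.suffix T q)) sa = take (index q sa) sa.
Proof.
move=> qn; apply: filter_key_lt_sorted; last by rewrite mem_suffix_array.
- by apply: sort_sorted => i j; apply: lexle_total.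
- by move=> i j; rewrite !mem_suffix_array; apply: suffix_inj.
Qed.

Lemma suffix_rank_index q : q \in iota 1 n -> suffix_rank q = index q sa.
Proof.
move=> qn; rewrite /suffix_rank -(permP perm_suffix_array) -size_filter.
by rewrite filter_suffix_array // size_takel // index_size.
Qed.

Lemma take_suffix_array_rank q : q \in iota 1 n ->
  take (suffix_rank q) sa = filter (fun j => lexlt (Defs.suffix T j) (Defs.suffix T q)) sa.
Proof. by move=> qn; rewrite filter_suffix_array // suffix_rank_index. Qed.

Lemma nth_suffix_array_rank q : q \in iota 1 n -> nth 0 sa (suffix_rank q) = q.
Proof. by move=> qn; rewrite suffix_rank_index // nth_index // mem_suffix_array. Qed.

Lemma suffix_rank_lt q : q \in iota 1 n -> suffix_rank q < n.
Proof.
by move=> qn; rewrite suffix_rank_index // -size_suffix_array index_mem mem_suffix_array.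
Qed.

Lemma mem_nth_suffix_array r : r < n -> nth 0 sa r \in iota 1 n.
Proof. by move=> rn; rewrite -mem_suffix_array mem_nth // size_suffix_array. Qed.

Lemma suffix_rank_nth r : r < n -> suffix_rank (nth 0 sa r) = r.
Proof.
move=> rn; rewrite suffix_rank_index ?mem_nth_suffix_array //.
by rewrite index_uniq ?uniq_suffix_array ?size_suffix_array.
Qed.

Lemma nth_suffix_arrayP r : r < n ->
  exists q, [/\ q < n, nth 0 sa r = q.+1 & suffix_rank q.+1 = r].
Proof.
move=> rn; have := mem_nth_suffix_array rn; rewrite mem_iota.
case E: (nth 0 sa r) => [//|q] /andP[_ qn]; exists q; split => //.
by rewrite -E suffix_rank_nth.
Qed.

Lemma suffix_rank_inj : {in iota 1 n &, injective suffix_rank}.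
Proof.
by move=> q q' qn q'n e; rewrite -(nth_suffix_array_rank qn) e nth_suffix_array_rank.
Qed.

Lemma suffix_rank_succ q :
  suffix_rank q.+1 = count (fun i => lexlt (drop i T) (drop q T)) (iota 0 n).
Proof. by rewrite /suffix_rank (iotaDl 1 0) count_map. Qed.

Lemma bwtE z : bwt T = map (bwt_char z) sa.
Proof.
case E: T => [|t0 T']; first by [].
rewrite -E /bwt {1}E; apply/eq_in_map => i; rewrite mem_suffix_array mem_iota.
case/andP=> _ lti; rewrite /bwt_char; case: ifP => // i1; last by rewrite E.
by apply: set_nth_default; lia.
Qed.

Lemma size_bwt : size (bwt T) = n.
Proof.
case E: T => [|z s]; first by [].
by rewrite -E (bwtE z) size_map size_suffix_array.
Qed.

Lemma nth_bwt z r : r < n -> nth z (bwt T) r = bwt_char z (nth 0 sa r).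
Proof. by move=> rn; rewrite (bwtE z) (nth_map 0) // size_suffix_array. Qed.

Lemma nth_bwt_rank z q : q \in iota 1 n -> nth z (bwt T) (suffix_rank q) = bwt_char z q.
Proof. by move=> qn; rewrite nth_bwt ?suffix_rank_lt // nth_suffix_array_rank. Qed.

Lemma map_bwt_char_iota z : 0 < n -> map (bwt_char z) (iota 1 n) = rot n.-1 T.
Proof.
move=> n_gt0; have n_eq : n = n.-1.+1 by rewrite prednK.
rewrite /rot; have -> : drop n.-1 T = [:: last z T].
  by rewrite (drop_nth z) ?nth_last ?drop_oversize ?size_drop //; lia.
rewrite {1}n_eq /= (iotaDl 1 1); congr cons; rewrite -map_comp.
apply: (@eq_from_nth _ z); rewrite size_map size_iota ?size_takel //; first lia.
by move=> i ilt; rewrite (nth_map 0) ?size_iota // nth_iota // nth_take.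
Qed.

Lemma perm_bwt : perm_eq (bwt T) T.
Proof.
case E: T => [|z s]; first by rewrite /bwt.
rewrite -E (bwtE z); apply: perm_trans (perm_map _ perm_suffix_array) _.
by rewrite map_bwt_char_iota ?perm_rot ?E.
Qed.

End SuffixRank.

(* One step of the LF-mapping: the rank of the suffix one position to the left,
   computed from the BWT alone. *)
Definition lf_step (disp : Order.disp_t) (Sig : finOrderType disp) (z : Sig) (L : seq Sig) r
  :=
  count (fun e => (e < nth z L r)%O) L + count (pred1 (nth z L r)) (take r L).

Section BwtInversion.
Variables (disp : Order.disp_t) (Sig : finOrderType disp) (T : seq Sig) (z : Sig).
Hypothesis T_valid : valid_text T.
Local Notation n := (size T).
Local Notation S := (Defs.suffix T).

Let n_gt0 : 0 < n. Proof. by case: T_valid. Qed.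

Let last_lt i : i < n.-1 -> (last z T < nth z T i)%O.
Proof. by case: T_valid => _; apply. Qed.

Let iota_n : iota 1 n = iota 1 n.-1 ++ [:: n].
Proof. by rewrite -{1}(prednK n_gt0) -[n.-1.+1]addn1 iotaD add1n prednK. Qed.

Let iota_1 : iota 1 n = 1 :: map succn (iota 1 n.-1).
Proof. by rewrite -{1}(prednK n_gt0) /= -(iotaDl 1 1). Qed.

Lemma suffix_last : S n = [:: last z T].
Proof. by rewrite /Defs.suffix (drop_nth z) ?prednK ?nth_last ?drop_size //; lia. Qed.

Lemma suffix_cons j : 0 < j < n -> S j = nth z T j.-1 :: S j.+1.
Proof. by case/andP=> j0 jn; rewrite /Defs.suffix (drop_nth z) ?prednK //; lia. Qed.

Lemma count_bwt (P : pred Sig) :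
  count P (bwt T) = P (last z T) + count (fun i => P (nth z T i.-1)) (iota 1 n.-1).
Proof.
rewrite (permP (perm_bwt T)) -(permP (introT permPl (perm_rot n.-1 T))).
rewrite -(map_bwt_char_iota z) //.
rewrite count_map iota_1 /= count_map; congr (_ + _).
by apply: eq_in_count => i; rewrite mem_iota /= /bwt_char ltnS => /andP[->].
Qed.

Lemma count_lexlt_cons (c : Sig) s : (last z T < c)%O ->
  count (fun j => lexlt (S j) (c :: s)) (iota 1 n) =
    count (fun e => (e < c)%O) (bwt T) +
    count (fun i => (nth z T i.-1 == c) && lexlt (S i.+1) s) (iota 1 n.-1).
Proof.
move=> lc; rewrite count_bwt lc iota_n count_cat /= suffix_last /= lc addn0 addnC.
rewrite -addnA; congr (_ + _); rewrite -count_predUI.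
rewrite (@eq_count _ (predI _ _) pred0) ?count_pred0 ?addn0; last first.
  by move=> i /=; case: ltgtP.
apply: eq_in_count => i; rewrite mem_iota => /andP[i1 i2].
by rewrite suffix_cons //; lia.
Qed.

Lemma count_take_bwt_rank (c : Sig) q : last z T != c -> q \in iota 1 n ->
  count (pred1 c) (take (suffix_rank T q) (bwt T)) =
    count (fun i => (nth z T i.-1 == c) && lexlt (S i.+1) (S q)) (iota 1 n.-1).
Proof.
move=> lc qn; rewrite (bwtE T z) -map_take take_suffix_array_rank // count_map.
rewrite count_filter (permP (perm_suffix_array T)) iota_1 /= /bwt_char /= (negbTE lc).
by rewrite count_map; apply: eq_in_count => i; rewrite mem_iota /= ltnS => /andP[->].
Qed.

Lemma suffix_rank_last : suffix_rank T n = 0.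
Proof.
apply/eqP; rewrite -leqn0 leqNgt -has_count; apply/hasPn => j.
rewrite mem_iota suffix_last => /andP[j1 j2].
case: (ltngtP j n) => [jn||->]; [|lia|by rewrite suffix_last lexlt_irr].
rewrite suffix_cons ?j1 //= negb_or negb_and -leNgt le_eqVlt last_lt ?orbT //=; last lia.
by rewrite eq_sym lt_eqF ?last_lt //; lia.
Qed.

Lemma suffix_rank_pred q : 1 < q <= n ->
  suffix_rank T q.-1 = lf_step z (bwt T) (suffix_rank T q).
Proof.
case/andP=> q1 qn; have qi : q \in iota 1 n by rewrite mem_iota; lia.
rewrite /lf_step nth_bwt_rank // /bwt_char q1.
have lc : (last z T < nth z T q.-2)%O by apply: last_lt; lia.
rewrite count_take_bwt_rank ?(lt_eqF lc) // -count_lexlt_cons //.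
by rewrite {1}/suffix_rank suffix_cons //; lia.
Qed.

End BwtInversion.

Lemma suffix_rank_iter_lf (disp : Order.disp_t) (Sig : finOrderType disp) (T : seq Sig) z t :
  valid_text T -> t < size T ->
  suffix_rank T (size T - t) = iter t (lf_step z (bwt T)) 0.
Proof.
move=> vT; elim: t => [|t IH] lt_t; first by rewrite subn0 suffix_rank_last.
rewrite iterS -IH ?(ltnW lt_t) // -(suffix_rank_pred z vT) ?subnS //.
by apply/andP; split; [rewrite ltn_subRL addn1|exact: leq_subr].
Qed.

Lemma bwt_inj (disp : Order.disp_t) (Sig : finOrderType disp) (T T' : seq Sig) :
  valid_text T -> valid_text T' -> bwt T = bwt T' -> T = T'.
Proof.
move=> vT vT' eq_bwt.
have size_eq : size T = size T' by rewrite -(size_bwt T) eq_bwt size_bwt.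
have [n_gt0 _] := vT; have [z _] : exists z : Sig, True by case: (T) n_gt0 => // z; exists z.
have rank_eq q : q \in iota 1 (size T) -> suffix_rank T q = suffix_rank T' q.
  rewrite mem_iota => /andP[q1 qn]; have -> : q = size T - (size T - q).
    by rewrite subKn // -ltnS -add1n.
  have t_lt : size T - q < size T by rewrite ltn_subrL q1.
  rewrite (suffix_rank_iter_lf z vT t_lt) eq_bwt size_eq.
  by rewrite (suffix_rank_iter_lf z vT') // -size_eq.
apply: (@rot_inj (size T).-1); rewrite -(map_bwt_char_iota z) //.
rewrite size_eq -(map_bwt_char_iota z) -?size_eq //.
by apply/eq_in_map => q qi; rewrite -!nth_bwt_rank -?size_eq // rank_eq // eq_bwt.
Qed.

Section Family.
Variables (disp : Order.disp_t) (Sig : finOrderType disp).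
Variables (d a b : Sig).

Definition xblock (c : bool) : seq Sig := if c then [:: b; a; b; b] else [:: a; b; b; b].
Definition wblock (c : bool) : seq Sig := if c then [:: a; b] else [:: a; a].
Definition xpart (be : seq bool) := b :: flatten (map xblock be).
Definition wpart (ga : seq bool) := flatten (map wblock ga) ++ [:: d].
Local Notation family be ga := (xpart be ++ wpart ga).

Lemma size_xpart be : size (xpart be) = (size be * 4).+1.
Proof.
rewrite /xpart /=; congr S; elim: be => [|c be IH] //=.
by rewrite size_cat IH; case: c => /=; lia.
Qed.

Lemma size_wpart ga : size (wpart ga) = (size ga * 2).+1.
Proof.
rewrite /wpart size_cat addn1; congr S; elim: ga => [|c ga IH] //=.
by rewrite size_cat IH; case: c => /=; lia.
Qed.

Inductive wword : seq Sig -> Prop :=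
| wword_end : wword [:: d]
| wword_aa w : wword w -> wword (a :: a :: w)
| wword_ab w : wword w -> wword (a :: b :: w).

Definition wsuffix u :=
  wword u \/ (exists2 w, wword w & u = a :: w) \/ (exists2 w, wword w & u = b :: w).

Lemma wword_wpart ga : wword (wpart ga).
Proof. by elim: ga => [|[] ga IH] /=; [exact: wword_end|exact: wword_ab|exact: wword_aa]. Qed.

Lemma wsuffix_drop w0 i : wword w0 -> i < size w0 -> wsuffix (drop i w0).
Proof.
move=> Ww; elim: Ww i => [|w Ww IH|w Ww IH] [|[|i]] //= hi.
- by left; exact: wword_end.
- by left; exact: wword_aa.
- by right; left; exists w.
- exact: IH.
- by left; exact: wword_ab.
- by right; right; exists w.
- exact: IH.
Qed.

Lemma wword_head w : wword w -> (w = [:: d]) \/ exists r, w = a :: r.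
Proof. by case=> [|w' _|w' _]; [left|right; eexists|right; eexists]. Qed.

Definition xshape (u : seq Sig) :=
  [\/ u = [:: b], exists r, u = [:: b, b & r], exists r, u = [:: b, a, b, b & r]
    | exists r, u = [:: a, b, b & r]].

Lemma xshape_drop_blocks be i : i < size (flatten (map xblock be)) ->
  xshape (drop i (flatten (map xblock be))).
Proof.
elim: be i => [|c be IH] i //=.
have tail : forall F, F = flatten (map xblock be) -> xshape (b :: F).
  move=> F ->; case: be {IH} => [|[] be'] /=.
  - by constructor 1.
  - by constructor 2; eexists.
  - by constructor 3; eexists.
case: c => /=; case: i => [|[|[|[|i]]]] /= hi.
all: try (by constructor 2; eexists).
all: try (by constructor 3; eexists).
all: try (by constructor 4; eexists).
all: try (by apply: tail).
all: apply: IH; lia.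
Qed.

Lemma xshape_drop be i : i < size (xpart be) -> xshape (drop i (xpart be)).
Proof.
case: i => [|i] /= hi; last by apply: xshape_drop_blocks.
case: be {hi} => [|[] be'] /=.
- by constructor 1.
- by constructor 2; eexists.
- by constructor 3; eexists.
Qed.

Lemma xshape_size1 u : xshape u -> size u = 1 -> u = [:: b].
Proof. by case=> [->|[r ->]|[r ->]|[r ->]]. Qed.

Lemma xshape_size2 u : xshape u -> size u = 2 -> u = [:: b; b].
Proof. by case=> [->|[[|? ?] ->]|[r ->]|[r ->]]. Qed.

Lemma drop_xpart_last be : drop (size (xpart be)).-1 (xpart be) = [:: b].
Proof.
apply: xshape_size1; first by apply: xshape_drop; rewrite size_xpart.
by rewrite size_drop size_xpart; lia.
Qed.

Lemma drop_xpart_last2 be : 0 < size be -> drop (size (xpart be)).-2 (xpart be) = [:: b; b].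
Proof.
move=> h; apply: xshape_size2; first by apply: xshape_drop; rewrite size_xpart; lia.
by rewrite size_drop size_xpart; lia.
Qed.

Lemma nth_head_drop (s : seq Sig) i : nth d s i = head d (drop i s).
Proof. by elim: s i => [|x s IH] [|i] //=; rewrite drop0. Qed.

Hypotheses (lt_da : (d < a)%O) (lt_ab : (a < b)%O).

Let lt_db : (d < b)%O. Proof. exact: lt_trans lt_da lt_ab. Qed.

Lemma wword_lt_abb (s : seq Sig) r : (wword s \/ exists2 w, wword w & s = a :: w) ->
  lexlt s [:: a, b, b & r].
Proof.
case=> [Ws|[w Ww ->]].
  case: Ws => [|w _|w Ww] /=; rewrite ?lt_da ?eqxx ?lt_ab ?orbT //.
  by case: (wword_head Ww) => [->|[r' ->]] /=; rewrite ?eqxx ?lt_db ?lt_ab ?orbT.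
case: (wword_head Ww) => [->|[r' ->]] /=; by rewrite ?eqxx ?lt_db ?lt_ab ?orbT.
Qed.

Lemma wsuffix_lt_bb s r : wsuffix s -> lexlt s [:: b, b & r].
Proof.
case=> [Ws|[[w Ww ->]|[w Ww ->]]] /=.
- case: (wword_head Ws) => [->|[r' ->]] /=; by rewrite ?lt_db ?lt_ab.
- by rewrite lt_ab.
- rewrite eqxx lt_irreflexive /=.
  by case: (wword_head Ww) => [->|[r' ->]] /=; rewrite ?lt_db ?lt_ab.
Qed.

Lemma wsuffix_lt_babb s r : wsuffix s -> lexlt s [:: b, a, b, b & r].
Proof.
case=> [Ws|[[w Ww ->]|[w Ww ->]]] /=.
- case: (wword_head Ws) => [->|[r' ->]] /=; by rewrite ?lt_db ?lt_ab.
- by rewrite lt_ab.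
- rewrite eqxx lt_irreflexive /=; apply: wword_lt_abb; by left.
Qed.

Lemma wsuffix_lt_abb s r : wsuffix s -> lexlt s [:: a, b, b & r] = (head d s != b).
Proof.
move=> H; have: wsuffix s := H.
case=> [Ws|[[w Ww ->]|[w Ww ->]]].
- rewrite (wword_lt_abb r (or_introl Ws)).
  by case: (wword_head Ws) => [->|[r' ->]] /=; rewrite ?(lt_eqF lt_db) ?(lt_eqF lt_ab).
- rewrite (wword_lt_abb r (or_intror (ex_intro2 _ _ w Ww erefl))).
  by rewrite /= (lt_eqF lt_ab).
- by rewrite /= eqxx /= (lt_gtF lt_ab) (gt_eqF lt_ab).
Qed.

Lemma xshape_cases u : xshape u -> 1 < size u ->
  (exists r, u = [:: a, b, b & r]) \/
  ((head d u != a) /\ forall s t, wsuffix s -> lexlt s (u ++ t)).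
Proof.
case=> [->|[r ->]|[r ->]|[r ->]] //= hs.
- right; split; first by rewrite (gt_eqF lt_ab).
  by move=> s t Hs; apply: wsuffix_lt_bb.
- right; split; first by rewrite (gt_eqF lt_ab).
  by move=> s t Hs; apply: wsuffix_lt_babb.
- by left; exists r.
Qed.

Section FamilyText.
Variables (be ga : seq bool).
Local Notation x := (xpart be).
Local Notation w := (wpart ga).
Local Notation T := (family be ga).
Local Notation A1 := (size x).-1.
Local Notation n := (size T).

Lemma xlast_lt_size : A1 < n.
Proof. by rewrite size_cat size_wpart size_xpart; lia. Qed.

Lemma drop_family_x i : i < size x -> drop i T = drop i x ++ w.
Proof. by move=> h; rewrite drop_cat h. Qed.

Lemma drop_family_w i : A1 <= i -> drop i T = drop (i - A1) (b :: w).
Proof.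
move=> h; have -> : i = (i - A1) + A1 by lia.
rewrite -drop_drop addnK drop_cat ifT; last by rewrite size_xpart; lia.
by rewrite drop_xpart_last.
Qed.

Lemma wsuffix_drop_family i : A1 <= i -> i < n -> wsuffix (drop i T).
Proof.
move=> h1 h2; rewrite drop_family_w //.
case E: (i - A1) => [|j] /=.
  by right; right; exists w => //; exact: wword_wpart.
apply: wsuffix_drop; first exact: wword_wpart.
move: h2; rewrite size_cat; lia.
Qed.

Lemma xshape_drop_x i : i < A1 -> xshape (drop i x) /\ 1 < size (drop i x).
Proof.
move=> h; split; first by apply: xshape_drop; lia.
by rewrite size_drop; lia.
Qed.

Lemma wpart_lt_xsuffix i : i < size x -> lexlt w (drop i x ++ w).
Proof.
move=> h; have := xshape_drop h.
have hw : forall t, lexlt w (b :: t).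
  by move=> t; case: (wword_head (wword_wpart ga)) => [->|[r ->]] /=; rewrite ?lt_db ?lt_ab.
case=> [->|[r ->]|[r ->]|[r ->]]; rewrite ?cat_cons ?hw //.
by apply: wword_lt_abb; left; exact: wword_wpart.
Qed.

Lemma lexlt_x_w i0 i : A1 <= i0 -> i0 < n -> i < A1 ->
  lexlt (drop i T) (drop i0 T) = (nth d x i == a) && (head d (drop i0 T) == b).
Proof.
move=> h1 h2 h3.
have S0 := wsuffix_drop_family h1 h2.
have [G sz] := xshape_drop_x h3.
rewrite (drop_family_x (i := i)); last by lia.
rewrite nth_head_drop.
case: (xshape_cases G sz) => [[r ->]|[na Hlt]].
  rewrite /= eqxx /=.
  case E: (head d (drop i0 T) == b).
    move: E; case: (drop i0 T) => [|c s] /=; first by rewrite (lt_eqF lt_db).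
    by move/eqP => ->; rewrite lt_ab.
  by have := wsuffix_lt_abb (r ++ w) S0; rewrite /= E => /lexlt_asym.
rewrite (negbTE na) /=; apply: lexlt_asym.
by apply: (Hlt _ _ S0).
Qed.

Lemma nth_xpart_ab i : i < size x -> nth d x i = a \/ nth d x i = b.
Proof.
by move=> h; rewrite nth_head_drop; case: (xshape_drop h) => [->|[r ->]|[r ->]|[r ->]]; auto.
Qed.

Lemma drop_family_b i : i < size x -> nth d x i != a -> exists t, drop i T = b :: t.
Proof.
move=> h na; rewrite drop_family_x // (drop_nth d) //.
case: (nth_xpart_ab h) na => -> //; last by eexists.
by rewrite eqxx.
Qed.

Lemma drop_family_a i : i < size x -> nth d x i = a -> exists t, drop i T = a :: t.
Proof. by move=> h e; rewrite drop_family_x // (drop_nth d) // e; eexists. Qed.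

Lemma lexlt_w_xb i0 i : i0 < A1 -> nth d x i0 != a -> A1 <= i -> i < n ->
  lexlt (drop i T) (drop i0 T).
Proof.
move=> h1 na h2 h3.
have [G sz] := xshape_drop_x h1.
rewrite (drop_family_x (i := i0)); last by lia.
case: (xshape_cases G sz) => [[r E]|[_ Hlt]].
  by move: na; rewrite nth_head_drop E eqxx.
by apply: Hlt; apply: wsuffix_drop_family.
Qed.

Lemma lexlt_xa_xb i0 i : i0 < A1 -> nth d x i0 != a -> i < A1 -> nth d x i = a ->
  lexlt (drop i T) (drop i0 T).
Proof.
move=> h1 na h2 e.
have hlt : i0 < size x by lia.
have [t1 ->] := drop_family_b hlt na.
have [t2 ->] : exists t, drop i T = a :: t by apply: drop_family_a => //; lia.
by rewrite /= lt_ab.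
Qed.

(* The 0-based starting positions of the [low_count] smallest suffixes. *)
Definition low_pos i := (A1 <= i) || (nth d x i == a).

Lemma lexlt_xb_low i0 i : i0 < n -> low_pos i0 -> i < A1 -> nth d x i != a ->
  lexlt (drop i T) (drop i0 T) = false.
Proof.
move=> h0 R0 h na.
case/orP: R0 => [y0|/eqP xa].
  by rewrite lexlt_x_w // (negbTE na).
case: (ltnP i0 A1) => h0'; last by rewrite lexlt_x_w // (negbTE na).
have hlt : i < size x by lia.
have [t1 ->] := drop_family_b hlt na.
have [t2 ->] : exists t, drop i0 T = a :: t by apply: drop_family_a => //; lia.
by rewrite /= (lt_gtF lt_ab) (gt_eqF lt_ab).
Qed.

Lemma count_a_xblocks be' : count (pred1 a) (flatten (map xblock be')) = size be'.
Proof.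
elim: be' => //= c be' IH; rewrite count_cat IH.
by case: c => /=; rewrite eqxx (gt_eqF lt_ab) /=.
Qed.

Lemma count_xpart_a : count (fun i => nth d x i == a) (iota 0 A1) = size be.
Proof.
have h : count (fun i => nth d x i == a) (iota 0 (size x)) = size be.
  have -> : count (fun i => nth d x i == a) (iota 0 (size x)) = count (pred1 a) x.
    by rewrite -{3}(mkseq_nth d x) /mkseq count_map.
  by rewrite /= (gt_eqF lt_ab) /= count_a_xblocks.
have e : size x = (size x).-1.+1 by rewrite size_xpart.
rewrite -h [in RHS]e.
have L : nth d x (size x).-1 = b.
  have := drop_xpart_last be; rewrite (drop_nth d); first by case.
  by rewrite size_xpart.
rewrite -[(size x).-1.+1]addn1 iotaD count_cat add0n (_ : count _ [:: A1] = 0) ?addn0 //.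
by rewrite [LHS]/= L (gt_eqF lt_ab).
Qed.

Lemma count_low_pos : count low_pos (iota 0 n) = (n - A1) + size be.
Proof.
have hA := xlast_lt_size.
have -> : iota 0 n = iota 0 A1 ++ iota A1 (n - A1).
  by rewrite -iotaD; congr iota; lia.
rewrite count_cat addnC; congr (_ + _).
  rewrite (@eq_in_count _ _ predT); first by rewrite count_predT size_iota.
  by move=> i; rewrite mem_iota /low_pos => /andP[-> _].
rewrite -count_xpart_a; apply: eq_in_count => i; rewrite mem_iota /low_pos => /andP[_ h].
by rewrite leqNgt h.
Qed.

Definition low_count := (n - A1) + size be.

Lemma rank_low_lt q : q < n -> low_pos q -> suffix_rank T q.+1 < low_count.
Proof.
move=> qn low_q; rewrite suffix_rank_succ /low_count -count_low_pos.
apply: (sub_in_count_lt (x := q)); rewrite ?mem_iota ?lexlt_irr //.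
move=> i; rewrite mem_iota add0n => /andP[_ hi] lt_i; rewrite /low_pos.
case: (leqP A1 i) => //= hiA.
by apply: contraTT lt_i => na; rewrite lexlt_xb_low.
Qed.

Lemma rank_high_ge q : q < A1 -> nth d x q != a -> low_count <= suffix_rank T q.+1.
Proof.
move=> qA na; rewrite suffix_rank_succ /low_count -count_low_pos.
apply: sub_in_count => i; rewrite mem_iota add0n => /andP[_ hi].
rewrite /low_pos; case/orP=> [hy|/eqP xa].
  by apply: lexlt_w_xb.
case: (leqP A1 i) => hiA; first by apply: lexlt_w_xb.
by apply: lexlt_xa_xb.
Qed.

Lemma rank_w_pos q : A1 <= q -> q < n ->
  suffix_rank T q.+1 = (head d (drop q T) == b) * size be +
    count (fun i => lexlt (drop i T) (drop q T)) (iota A1 (n - A1)).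
Proof.
move=> le_q lt_q; rewrite suffix_rank_succ.
have -> : iota 0 n = iota 0 A1 ++ iota A1 (n - A1).
  by rewrite -iotaD; congr iota; have := xlast_lt_size; lia.
rewrite count_cat; congr (_ + _).
rewrite (@eq_in_count _ _ (fun i => (nth d x i == a) && (head d (drop q T) == b))); last first.
  by move=> i; rewrite mem_iota => /andP[_ lt_i]; rewrite lexlt_x_w.
case: (_ == b); last first.
  by rewrite mul0n (eq_count (a2 := pred0)) ?count_pred0 // => i; rewrite andbF.
by rewrite mul1n -count_xpart_a; apply: eq_count => i; rewrite andbT.
Qed.

End FamilyText.

Lemma rank_w_indep be be' ga q : size be = size be' ->
  (size (xpart be)).-1 <= q -> q < size (family be ga) ->
  suffix_rank (family be ga) q.+1 = suffix_rank (family be' ga) q.+1.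
Proof.
move=> sz le_q lt_q; have sx : size (xpart be) = size (xpart be') by rewrite !size_xpart sz.
have drop_eq i : (size (xpart be)).-1 <= i ->
    drop i (family be ga) = drop i (family be' ga).
  by move=> le_i; rewrite !drop_family_w // -sx.
have sT : size (family be ga) = size (family be' ga).
  by rewrite !(size_cat (xpart _)) sx.
rewrite (rank_w_pos le_q lt_q) rank_w_pos -?sx -?sT // sz drop_eq //.
congr (_ + _); apply: eq_in_count => i; rewrite mem_iota => /andP[le_i _].
by rewrite drop_eq.
Qed.

Lemma rank_high_indep be ga ga' q : size ga = size ga' ->
  q < (size (xpart be)).-1 -> nth d (xpart be) q != a ->
  suffix_rank (family be ga) q.+1 = suffix_rank (family be ga') q.+1.
Proof.
move=> sz h1 na.
have sT : size (family be ga) = size (family be ga').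
  by rewrite (size_cat (xpart be) (wpart ga)) (size_cat (xpart be) (wpart ga')) !size_wpart sz.
rewrite !suffix_rank_succ -sT; apply: eq_in_count => i; rewrite mem_iota => /andP[_ hi].
case: (ltnP i (size (xpart be)).-1) => hiA.
  rewrite !drop_family_x; try lia.
  apply: lexlt_drop_cat_indep => j hj; exact: wpart_lt_xsuffix.
by rewrite !lexlt_w_xb // -sT.
Qed.

Lemma nth_xpart_pred_a be i : i < size (xpart be) -> nth d (xpart be) i = a ->
  0 < i /\ nth d (xpart be) i.-1 = b.
Proof.
case: i => [|i] lt_i xa; first by move: xa => /= /eqP; rewrite (gt_eqF lt_ab).
split=> //; move: xa; rewrite !nth_head_drop -add1n -drop_drop.
case: (xshape_drop (ltnW lt_i)) => [|[r]|[r]|[r]] -> //= /eqP;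
  by rewrite ?(gt_eqF lt_ab) ?(lt_eqF lt_da).
Qed.

Lemma valid_family be ga : valid_text (family be ga).
Proof.
have hall : all (fun c => (c == a) || (c == b)) (xpart be ++ flatten (map wblock ga)).
  rewrite all_cat /= eqxx orbT /=; apply/andP; split.
    by elim: be => //= c be' IH; rewrite all_cat IH andbT; case: c; rewrite /= !eqxx ?orbT.
  by elim: ga => //= c ga' IH; rewrite all_cat IH andbT; case: c; rewrite /= !eqxx ?orbT.
have E : family be ga = rcons (xpart be ++ flatten (map wblock ga)) d.
  by rewrite /wpart catA cats1.
split; first by rewrite size_cat size_xpart.
move=> x0 i; rewrite E last_rcons nth_rcons size_rcons /= => hi; rewrite hi.
have := all_nthP x0 hall i hi.
by case/orP => /eqP ->; [exact: lt_da|exact: lt_db].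
Qed.

Lemma nth_family_tail be ga z j : 0 < size be -> (size (xpart be)).-2 <= j ->
  nth z (family be ga) j = nth z ([:: b; b] ++ wpart ga) (j - (size (xpart be)).-2).
Proof.
move=> hb hj.
rewrite -(drop_xpart_last2 hb) -drop_family_x; last by rewrite size_xpart; lia.
by rewrite nth_drop; congr nth; lia.
Qed.

Lemma bwt_char_family_w be ga z q : 0 < size be ->
  (size (xpart be)).-1 <= q -> q < size (family be ga) ->
  bwt_char (family be ga) z q.+1 = nth z [:: b, b & wpart ga] (q - (size (xpart be)).-1).
Proof.
move=> be_gt0 le_q lt_q; have := size_xpart be; rewrite /bwt_char => sx.
by rewrite ifT ?nth_family_tail //; try congr nth; lia.
Qed.

Lemma bwt_char_family_a be ga z q : q < size (xpart be) -> nth d (xpart be) q = a ->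
  bwt_char (family be ga) z q.+1 = b.
Proof.
move=> lt_q xa; have [q_gt0 xb] := nth_xpart_pred_a lt_q xa.
by rewrite /bwt_char ifT ?nth_cat ?ifT ?(set_nth_default d) //; lia.
Qed.

Lemma nth_bwt_low_indep be be' ga z r : size be = size be' -> 0 < size be ->
  r < low_count be ga ->
  nth z (bwt (family be ga)) r = nth z (bwt (family be' ga)) r.
Proof.
move=> sz be_gt0 lt_r; set T1 := family be ga; set T2 := family be' ga.
have sx : size (xpart be) = size (xpart be') by rewrite !size_xpart sz.
have sT : size T1 = size T2 by rewrite !size_cat sx.
have lt_r1 : r < size T1 by move: lt_r; rewrite /low_count size_cat size_wpart size_xpart; lia.
have [q1 [lt_q1 sa1 rank1]] := nth_suffix_arrayP lt_r1.
have [q2 [lt_q2 sa2 rank2]] := nth_suffix_arrayP (leq_trans lt_r1 (eq_leq sT)).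
have w_pos_eq : (size (xpart be)).-1 <= q1 \/ (size (xpart be)).-1 <= q2 -> q1 = q2.
  case=> le_q; apply: succn_inj.
  - apply: (@suffix_rank_inj _ _ T2); rewrite ?mem_iota -?sT; try lia.
    by rewrite rank2 -(rank_w_indep sz).
  - apply: (@suffix_rank_inj _ _ T1); rewrite ?mem_iota ?sT; try lia.
    by rewrite rank1 (rank_w_indep sz le_q) ?rank2 // -/T1 sT.
rewrite !nth_bwt -?sT // sa1 sa2.
have [le_q1|lt_q1x] := leqP (size (xpart be)).-1 q1.
  rewrite -(w_pos_eq (or_introl le_q1)) !bwt_char_family_w -?sx -?sT //; lia.
have [le_q2|lt_q2x] := leqP (size (xpart be)).-1 q2.
  by move: lt_q1x; rewrite (w_pos_eq (or_intror le_q2)) ltnNge le_q2.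
(* Otherwise both suffixes start at an [a] of x, preceded by a [b]. *)
have low_a (c : seq bool) q : size c = size be -> q < (size (xpart c)).-1 ->
    suffix_rank (family c ga) q.+1 = r -> nth d (xpart c) q = a.
  move=> sc lt_q rank_q; apply/eqP/negPn/negP => /(rank_high_ge ga lt_q).
  by rewrite rank_q; move: lt_r; rewrite /low_count !size_cat !size_xpart sc; lia.
rewrite !bwt_char_family_a //; try lia; apply: low_a => //; lia.
Qed.

Lemma nth_bwt_high_indep be ga ga' z r : size ga = size ga' -> low_count be ga <= r ->
  nth z (bwt (family be ga)) r = nth z (bwt (family be ga')) r.
Proof.
move=> sz le_r; set T1 := family be ga; set T2 := family be ga'.
have sT : size T1 = size T2 by rewrite /T1 /T2 !(size_cat (xpart be)) !size_wpart sz.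
have [lt_r1|le_n] := ltnP r (size T1); last by rewrite !nth_default // size_bwt -?sT.
have [q [lt_q sa1 rank1]] := nth_suffix_arrayP lt_r1.
have : ~~ low_pos be q by apply: contraTN le_r => /(rank_low_lt lt_q); rewrite rank1 -ltnNge.
rewrite /low_pos negb_or -ltnNge => /andP[lt_qx xb].
have rank2 : suffix_rank T2 q.+1 = r by rewrite -(rank_high_indep sz).
have qn2 : q.+1 \in iota 1 (size T2) by rewrite mem_iota -sT; lia.
rewrite !nth_bwt -?sT // sa1 -rank2 nth_suffix_array_rank // /bwt_char.
case: ifP => [q_gt0|_]; last by rewrite /T1 /T2 /wpart !catA !last_cat.
by rewrite /T1 /T2 !(nth_cat _ (xpart be)) !ifT //; lia.
Qed.

Lemma xpart_inj be be' : size be = size be' -> xpart be = xpart be' -> be = be'.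
Proof.
move=> sz [e]; apply: (flatten_map_inj (k := 4) _ _ sz e); first by case.
by move=> [] [] //= [] /eqP; rewrite ?(gt_eqF lt_ab) ?(lt_eqF lt_ab).
Qed.

Lemma wpart_inj ga ga' : size ga = size ga' -> wpart ga = wpart ga' -> ga = ga'.
Proof.
move=> sz; rewrite /wpart !cats1 => /rcons_inj [e].
apply: (flatten_map_inj (k := 2) _ _ sz e); first by case.
by move=> [] [] //= [] /eqP; rewrite ?(gt_eqF lt_ab) ?(lt_eqF lt_ab).
Qed.

Lemma bwt_family_split be ga : size be = size ga -> 0 < size be ->
  bwt (family be ga) =
    take (size ga * 3 + 2) (bwt (family ga ga)) ++
    drop (size ga * 3 + 2) (bwt (family be be)).
Proof.
move=> sz be_gt0; set K := size ga * 3 + 2.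
have low_K (c : seq bool) : size c = size ga -> low_count c ga = K.
  by move=> sc; rewrite /low_count (size_cat (xpart c)) size_xpart size_wpart sc; lia.
have K_le (c : seq bool) : size c = size ga -> K <= size (bwt (family c ga)).
  by move=> sc; rewrite size_bwt (size_cat (xpart c)) size_xpart size_wpart sc; lia.
rewrite -{1}(cat_take_drop K (bwt _)); congr (_ ++ _).
  apply: (@eq_from_nth _ d); first by rewrite !size_takel ?K_le.
  move=> i; rewrite size_takel ?K_le // => lt_i; rewrite !nth_take //.
  by apply: nth_bwt_low_indep; rewrite ?low_K.
apply: (@eq_from_nth _ d).
  by rewrite !size_drop !size_bwt !(size_cat (xpart _)) !size_wpart sz.
move=> i _; rewrite !nth_drop; apply: nth_bwt_high_indep => //.
by rewrite low_K // leq_addr.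
Qed.

End Family.

Section CrossingSequence.
Variables (Sig : finType) (m : nat) (M : machine Sig m).
Local Notation state := (m.-tuple bool).
Local Notation cell := (disk_alph M).

Lemma scan_cat q (D1 D2 : seq cell) :
  scan q (D1 ++ D2) = ((scan (scan q D1).1 D2).1, (scan q D1).2 ++ (scan (scan q D1).1 D2).2).
Proof.
elim: D1 q => [|x D1 IH] q /=; first by case: (scan q D2).
case: (step q x) => q1 w; rewrite IH.
case: (scan q1 D1) => q2 w2 /=.
by case: (scan q2 D2) => q3 w3 /=; rewrite catA.
Qed.

Lemma pass_cat q (D1 D2 : seq cell) :
  pass (q, D1 ++ D2) =
    ((pass ((scan q D1).1, D2)).1, (scan q D1).2 ++ (pass ((scan q D1).1, D2)).2).
Proof.
rewrite /pass /= scan_cat /=.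
by case: (scan (scan q D1).1 D2) => q1 d1 /=; case: (finish M q1) => q2 w; rewrite catA.
Qed.

(* [p] passes on the disk [D1 ++ D2], keeping track of the images of both
   parts: returns the crossing sequence (for each pass, the state when the
   head enters [D2] and the state at the end of the pass), and the final state
   with the final images of [D1] and [D2]. *)
Fixpoint run_cut p (q : state) (D1 D2 : seq cell)
  : seq (state * state) * (state * seq cell * seq cell) :=
  if p is p'.+1 then
    let c := (scan q D1).1 in
    let q' := (pass (c, D2)).1 in
    let r := run_cut p' q' (scan q D1).2 (pass (c, D2)).2 in
    ((c, q') :: r.1, r.2)
  else ([::], (q, D1, D2)).

Lemma size_run_cut p q D1 D2 : size (run_cut p q D1 D2).1 == p.
Proof. by elim: p q D1 D2 => //= p IH q D1 D2; apply: IH. Qed.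

Lemma iter_pass_cat p q D1 D2 :
  iter p (@pass _ _ M) (q, D1 ++ D2) =
    ((run_cut p q D1 D2).2.1.1, (run_cut p q D1 D2).2.1.2 ++ (run_cut p q D1 D2).2.2).
Proof.
elim: p q D1 D2 => [|p IH] q D1 D2 //.
by rewrite iterSr pass_cat IH.
Qed.

(* Each part evolves only through its own cells and the crossing states. *)
Lemma run_cut_paste p q D1 D2 E1 E2 :
  (run_cut p q D1 D2).1 = (run_cut p q E1 E2).1 ->
  (run_cut p q D1 E2).2.1.2 = (run_cut p q D1 D2).2.1.2 /\
  (run_cut p q D1 E2).2.2 = (run_cut p q E1 E2).2.2.
Proof.
elim: p q D1 D2 E1 E2 => [|p IH] q D1 D2 E1 E2 //=.
case=> eq_c eq_q eq_r; rewrite -eq_c in eq_q eq_r *.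
by rewrite -eq_q in eq_r *; apply: IH.
Qed.

Definition crossings p (x y : seq Sig) : p.-tuple (state * state) :=
  Tuple (size_run_cut p (init M) (map (enc M) x) (map (enc M) y)).

Lemma disk_after_cut_paste p (x1 y1 x2 y2 : seq Sig) :
  crossings p x1 y1 = crossings p x2 y2 ->
  exists L1 R1 L2 R2, [/\ disk_after M p (x1 ++ y1) = L1 ++ R1,
    disk_after M p (x2 ++ y2) = L2 ++ R2 & disk_after M p (x1 ++ y2) = L1 ++ R2].
Proof.
move=> /(congr1 val) /run_cut_paste [eqL eqR].
rewrite /disk_after !map_cat !iter_pass_cat /=.
by do 4 eexists; split; rewrite ?eqL ?eqR.
Qed.

End CrossingSequence.

Theorem crossing_sequence_lower_bound (Sig : finType) (m p : nat) (M : machine Sig m)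
    (I : finType) (X Y U V : I -> seq Sig) :
  #|{: p.-tuple (m.-tuple bool * m.-tuple bool)}| < #|I| ->
  (forall i j, size (U i) = size (U j)) -> (forall i j, size (V i) = size (V j)) ->
  injective U -> injective V ->
  exists i j, ~ outputs M p (X i ++ Y j) (U j ++ V i).
Proof.
move=> card_lt sU sV U_inj V_inj.
have [/existsP[i /existsP[j /eqP]]|/existsPn all_ok] :=
  boolP [exists i, exists j, disk_after M p (X i ++ Y j) != map (enc M) (U j ++ V i)].
  by exists i, j.
have /injectivePn[i1 [i2 ne_i eq_cross]] : ~~ injectiveb (fun i => crossings M p (X i) (Y i)).
  by apply/injectiveP => /leq_card; rewrite leqNgt card_lt.
have [L1 [R1 [L2 [R2 []]]]] := disk_after_cut_paste eq_cross.
have ok i j : disk_after M p (X i ++ Y j) = map (enc M) (U j) ++ map (enc M) (V i).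
  by apply/eqP; have /existsPn/(_ j) := all_ok i; rewrite negbK map_cat.
rewrite !ok => e1 e2 e12; case/negP: ne_i; apply/eqP.
have [] := cat_cut_paste _ _ (esym e1) (esym e2) (esym e12); rewrite ?size_map //.
- by move/(inj_map (@enc_inj _ _ M))/U_inj.
- by move/(inj_map (@enc_inj _ _ M))/V_inj.
Qed.

Section HardInstances.
Variables (disp : Order.disp_t) (Sig : finOrderType disp) (d a b : Sig).
Hypotheses (lt_da : (d < a)%O) (lt_ab : (a < b)%O).
Variable k : nat.
Hypothesis k_gt0 : 0 < k.
Implicit Types i j : k.-tuple bool.

Local Notation family i j := (xpart a b i ++ wpart d a b j).

Definition bwt_head j := take (k * 3 + 2) (bwt (family j j)).
Definition bwt_tail i := drop (k * 3 + 2) (bwt (family i i)).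

Lemma bwt_family i j : bwt (family i j) = bwt_head j ++ bwt_tail i.
Proof. by rewrite /bwt_head /bwt_tail bwt_family_split ?size_tuple. Qed.

Lemma size_family i j : size (family i j) = k * 6 + 2.
Proof. by rewrite size_cat size_xpart // size_wpart // !size_tuple; lia. Qed.

Lemma bwt_head_inj : injective bwt_head.
Proof.
move=> j1 j2 eq_head; apply/val_inj/(wpart_inj (d := d) lt_ab); rewrite ?size_tuple //.
have /bwt_inj : bwt (family j1 j1) = bwt (family j1 j2) by rewrite !bwt_family eq_head.
move=> /(_ (valid_family lt_da lt_ab _ _) (valid_family lt_da lt_ab _ _)) /eqP.
by rewrite eqseq_cat // => /andP[_ /eqP].
Qed.

Lemma bwt_tail_inj : injective bwt_tail.
Proof.
move=> i1 i2 eq_tail; apply: val_inj; apply: (xpart_inj lt_ab); rewrite ?size_tuple //.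
have /bwt_inj : bwt (family i1 i1) = bwt (family i2 i1) by rewrite !bwt_family eq_tail.
move=> /(_ (valid_family lt_da lt_ab _ _) (valid_family lt_da lt_ab _ _)) /eqP.
by rewrite eqseq_cat ?size_xpart ?size_tuple // => /andP[/eqP].
Qed.

Lemma card_crossings_lt m p : 2 * (m * p) < k ->
  #|{: p.-tuple (m.-tuple bool * m.-tuple bool)}| < #|{: k.-tuple bool}|.
Proof.
rewrite !card_tuple card_prod !card_tuple card_bool -expnD -expnM ltn_exp2l //.
by rewrite addnn -mul2n; lia.
Qed.

Lemma bwt_lower_bound m p (M : machine Sig m) : 2 * (m * p) < k ->
  exists T, [/\ valid_text T, size T = k * 6 + 2 & ~ outputs M p T (bwt T)].
Proof.
move=> /card_crossings_lt card_lt.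
have [||i [j fails]] := crossing_sequence_lower_bound M (fun i => xpart a b (val i))
  (fun j => wpart d a b (val j)) card_lt _ _ bwt_head_inj bwt_tail_inj.
- by move=> j j'; rewrite !size_takel // size_bwt !size_family; lia.
- by move=> i i'; rewrite !size_drop !size_bwt !size_family.
exists (family i j); split; rewrite ?size_family ?bwt_family //.
exact: valid_family.
Qed.

Lemma ibwt_lower_bound m p (M : machine Sig m) : 2 * (m * p) < k ->
  exists T, [/\ valid_text T, size T = k * 6 + 2 & ~ outputs M p (bwt T) T].
Proof.
move=> /card_crossings_lt card_lt.
have xpart_inj' : injective (fun i : k.-tuple bool => xpart a b (val i)).
  by move=> i i' /(xpart_inj lt_ab); rewrite !size_tuple => /(_ erefl)/val_inj.
have wpart_inj' : injective (fun i : k.-tuple bool => wpart d a b (val i)).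
  by move=> i i' /(wpart_inj (d := d) lt_ab); rewrite !size_tuple => /(_ erefl)/val_inj.
have [||i [j fails]] := crossing_sequence_lower_bound M bwt_head bwt_tail card_lt _ _
  xpart_inj' wpart_inj'.
- by move=> i i'; rewrite !size_xpart // !size_tuple.
- by move=> i i'; rewrite !size_wpart // !size_tuple.
exists (family j i); split; rewrite ?size_family ?bwt_family //.
exact: valid_family.
Qed.

End HardInstances.

Lemma three_lt_elems (disp : Order.disp_t) (Sig : finOrderType disp) :
  3 <= #|Sig| -> exists d a b : Sig, (d < a)%O /\ (a < b)%O.
Proof.
move=> card3; set s := sort <=%O (enum Sig).
have size_s : size s = #|Sig| by rewrite size_sort cardE.
have sorted_s : sorted <%O s by rewrite sort_lt_sorted enum_uniq.
have [x0 _] : exists x : Sig, True.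
  by move: card3; rewrite cardE; case: (enum Sig) => // x; exists x.
have lt_nth := sorted_ltn_nth lt_trans x0 sorted_s.
exists (nth x0 s 0), (nth x0 s 1), (nth x0 s 2).
by split; apply: lt_nth; rewrite ?inE ?size_s //; lia.
Qed.

Theorem theorem7 (disp : Order.disp_t) (Sig : finOrderType disp) :
  3 <= #|Sig| ->
  forall m p : nat -> nat,
  little_o_n (fun n => m n * p n) ->
  (forall M : forall n, machine Sig (m n),
     forall N, exists n, N <= n /\
       exists T : seq Sig, valid_text T /\ size T = n /\
         ~ outputs (M n) (p n) T (bwt T))
  /\
  (forall M : forall n, machine Sig (m n),
     forall N, exists n, N <= n /\
       exists T : seq Sig, valid_text T /\ size T = n /\
         ~ outputs (M n) (p n) (bwt T) T).
Proof.
(* From [13 m p <= 6k + 2] and [k >= 5] follows [2 m p < k]. *)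
move=> card3 m p /(_ 13 isT) [N0 small_mp].
have [d [a [b [lt_da lt_ab]]]] := three_lt_elems card3.
pose k N := N + N0 + 5.
have k_gt0 N : 0 < k N by rewrite addn_gt0 orbT.
have mp_lt N : 2 * (m (k N * 6 + 2) * p (k N * 6 + 2)) < k N.
  by have := small_mp (k N * 6 + 2); rewrite /k; lia.
split=> M N; exists (k N * 6 + 2); (split; first by rewrite /k; lia).
- have [T [? ? ?]] := bwt_lower_bound lt_da lt_ab (k_gt0 N) (M _) (mp_lt N).
  by exists T.
- have [T [? ? ?]] := ibwt_lower_bound lt_da lt_ab (k_gt0 N) (M _) (mp_lt N).
  by exists T.
Qed.
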